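(* Let $X$ be a finite two-wide poset and let $w,y\in X$ with $w<y$ and $w\not\prec y$. Then there exist elements $x,\tilde x\in X$ with $x\neq\tilde x$, $w\prec x<y$ and $w\prec\tilde x<y$.
   Context: In a poset, write $a\prec b$ if $a<b$ and there is no $c$ with $a<c<b$. A poset $X$ is two-wide if for any $x,z,y\in X$ with $x\prec z\prec y$ there exists $z'\in X$, $z'\neq z$, with $x\prec z'\prec y$. *)

From HB Require Import structures.
From mathcomp Require Import all_boot all_order.
Set Implicit Arguments. Unset Strict Implicit. Unset Printing Implicit Defensive.
Import Order.Theory.
Local Open Scope order_scope.

Definition covers (d : Order.disp_t) (X : porderType d) (a b : X) : Prop :=
  a < b /\ ~ (exists c : X, a < c /\ c < b).

Definition two_wide (d : Order.disp_t) (X : porderType d) : Prop :=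
  forall x z y : X, covers x z -> covers z y ->
    exists z' : X, z' <> z /\ covers x z' /\ covers z' y.

From HB Require Import structures.
From mathcomp Require Import all_boot all_order.
Import Order.Theory.
Local Open Scope order_scope.

(* Since w < y is not a cover, some c lies strictly between them, and finiteness
   gives a cover w ⋖ x with x <= c < y, then a cover x ⋖ z with z <= y.  Two-wideness
   applied to the chain w ⋖ x ⋖ z supplies a second cover w ⋖ x' ⋖ z, and x' < z <= y. *)

Section FiniteCovers.

Context {d : Order.disp_t} {X : finPOrderType d}.
Implicit Types a b c : X.

Lemma between_of_not_covers {a b} :
  a < b -> ~ covers a b -> exists2 c, a < c & c < b.
Proof.
move=> ab ncov; case: (boolP [exists c, a < c < b]).
  by case/existsP=> c /andP[ac cb]; exists c.
move/existsPn=> none; case: ncov; split=> // -[c [ac cb]].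
by move: (none c); rewrite ac cb.
Qed.

Lemma exists_covers_le {a b} : a < b -> exists2 c, covers a c & c <= b.
Proof.
have [n] := ubnP #|[pred c | a < c < b]|; elim: n b => // n IH b.
rewrite ltnS => card_ab ab.
case: (boolP [exists c, a < c < b]); last first.
  move/existsPn=> none; exists b => //; split=> // -[c [ac cb]].
  by move: (none c); rewrite ac cb.
case/existsP=> c /andP[ac cb].
have sub_ac : [pred e | a < e < c] \proper [pred e | a < e < b].
  apply/properP; split.
    apply/subsetP=> e; rewrite !inE => /andP[ae ec].
    by rewrite ae (lt_trans ec cb).
  by exists c; rewrite !inE ?ltxx ?andbF // ac cb.
have [c' cov c'c] := IH c (leq_trans (proper_card sub_ac) card_ab) ac.
by exists c' => //; rewrite (le_trans c'c) ?ltW.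
Qed.

End FiniteCovers.

Theorem mainTheorem4 (d : Order.disp_t) (X : finPOrderType d) :
  two_wide X ->
  forall w y : X, w < y -> ~ covers w y ->
  exists x xt : X, x <> xt /\ covers w x /\ x < y /\ covers w xt /\ xt < y.
Proof.
move=> tw w y wy ncov.
have [c wc cy] := between_of_not_covers wy ncov.
have [x wx xc] := exists_covers_le wc.
have xy : x < y := le_lt_trans xc cy.
have [z xz zy] := exists_covers_le xy.
have [x' [x'x [wx' x'z]]] := tw w x z wx xz.
exists x, x'; do !split => //; first exact: nesym.
exact: lt_le_trans x'z.1 zy.
Qed.
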